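(* Let $n$ be odd and let $L$ be a reduced Latin square of order $n$ with rows $\sigma_1,\dots,\sigma_n$ and columns $\pi_1,\dots,\pi_n$ (as permutations). Let $\alpha\in S_n$, $j\in[n]$, and $\Theta=(\alpha,\ \alpha\pi_j\sigma_{\alpha^{-1}(1)}^{-1},\ \alpha\pi_j)$. Then $$\mathrm{par}(\Theta(L))=\mathrm{sgn}(\sigma_{\alpha^{-1}(1)})\,\mathrm{sgn}(\pi_j)\,\mathrm{par}(L).$$
   Context: A Latin square of order $n$ is an $n\times n$ array with entries in $[n]$, each symbol once in each row and column. Permutations compose right to left. An isotopism $(\alpha,\beta,\gamma)\in S_n^3$ acts by $(\alpha,\beta,\gamma)(L)=L'$ with $L'(\alpha(r),\beta(c))=\gamma(L(r,c))$. Rows and columns are viewed as permutations: if symbol $i$ appears in the $j$th place of a row (column) $\sigma$, then $\sigma(i)=j$; so row $r$ is $\sigma_r$ with $\sigma_r(L(r,c))=c$ and column $c$ is $\pi_c$ with $\pi_c(L(r,c))=r$. $L$ is reduced if its first row and first column are the identity permutation. $\mathrm{sgn}$ is the sign of a permutation, and $\mathrm{par}(L)$ is the product of the signs of all $n$ rows and all $n$ columns of $L$. *)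

From mathcomp Require Import all_boot all_order all_algebra all_fingroup.
Set Implicit Arguments. Unset Strict Implicit. Unset Printing Implicit Defensive.
Import GRing.Theory.

(* Latin square of order n on symbol set 'I_n (0-indexed [n]).
   lsq r c = L(r,c). *)
Record latin (n : nat) := Latin {
  lsq :> 'I_n -> 'I_n -> 'I_n;
  lsq_row_inj : forall r, injective (lsq r);
  lsq_col_inj : forall c, injective (fun r => lsq r c) }.

(* Row r as a permutation sigma_r with sigma_r (L r c) = c. *)
Definition row_sigma n (L : latin n) (r : 'I_n) : 'S_n :=
  (perm (@lsq_row_inj _ L r))^-1.
(* Column c as a permutation pi_c with pi_c (L r c) = r. *)
Definition col_pi n (L : latin n) (c : 'I_n) : 'S_n :=
  (perm (@lsq_col_inj _ L c))^-1.

Definition sgn n (s : 'S_n) : int := (-1) ^+ (odd_perm s).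

Definition par n (L : latin n) : int :=
  (\prod_(r : 'I_n) sgn (row_sigma L r)) * (\prod_(c : 'I_n) sgn (col_pi L c)).

Definition reduced n (L : latin n) : Prop :=
  forall i : 'I_n, val i = 0%N -> row_sigma L i = 1%g /\ col_pi L i = 1%g.

(* Right-to-left composition of permutations: (s \o t) x = s (t x).
   (mathcomp's s * t is left-to-right: (s * t) x = t (s x).) *)
Definition rcomp n (s t : 'S_n) : 'S_n := (t * s)%g.

Definition iso_fun n (a b g : 'S_n) (L : latin n) : 'I_n -> 'I_n -> 'I_n :=
  fun r c => g (L ((a^-1)%g r) ((b^-1)%g c)).

Lemma iso_row_inj n (a b g : 'S_n) (L : latin n) r : injective (iso_fun a b g L r).
Proof.
move=> x y /perm_inj /lsq_row_inj /perm_inj; done.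
Qed.

Lemma iso_col_inj n (a b g : 'S_n) (L : latin n) c :
  injective (fun r => iso_fun a b g L r c).
Proof.
move=> x y /perm_inj /(@lsq_col_inj _ L) /perm_inj; done.
Qed.

Definition isotope n (a b g : 'S_n) (L : latin n) : latin n :=
  Latin (@iso_row_inj n a b g L) (@iso_col_inj n a b g L).

Lemma iso_spec n (a b g : 'S_n) (L : latin n) r c :
  isotope a b g L (a r) (b c) = g (L r c).
Proof. by rewrite /= /iso_fun !permK. Qed.

From mathcomp Require Import all_boot all_order all_algebra all_fingroup.
From mathcomp Require Import ring.
Import GRing.Theory.

Set Implicit Arguments.
Unset Strict Implicit.
Unset Printing Implicit Defensive.
Local Open Scope ring_scope.

(* An isotopism multiplies every row and every column by the same two
   permutations on either side, so par changes by sgn(alpha)^n sgn(beta)^n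
   sgn(gamma)^(2n), which is sgn(alpha) sgn(beta) for odd n.  With the
   specific beta and gamma of the statement the two factors sgn(alpha)
   cancel. *)

Lemma sgnM n (s t : 'S_n) : sgn (s * t)%g = sgn s * sgn t.
Proof. by rewrite /sgn odd_permM signr_addb. Qed.

Lemma sgnV n (s : 'S_n) : sgn (s^-1)%g = sgn s.
Proof. by rewrite /sgn odd_permV. Qed.

Lemma sgn_sqr n (s : 'S_n) : sgn s * sgn s = 1.
Proof. by rewrite /sgn -signr_addb addbb. Qed.

Lemma prod_sgn_const_odd n (s : 'S_n) : odd n -> \prod_(i : 'I_n) sgn s = sgn s.
Proof.
move=> odd_n; rewrite prodr_const card_ord /sgn.
by case: (odd_perm s); rewrite ?expr1n // expr1 -signr_odd odd_n.
Qed.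

Lemma row_sigma_isotope n (a b g : 'S_n) (L : latin n) r :
  row_sigma (isotope a b g L) (a r) = (g^-1 * row_sigma L r * b)%g.
Proof.
rewrite /row_sigma -[b in RHS]invgK -!invMg; congr (_^-1)%g.
by apply/permP => c; rewrite !permM !(permE (@lsq_row_inj _ _ _)) /= /iso_fun permK.
Qed.

Lemma col_pi_isotope n (a b g : 'S_n) (L : latin n) c :
  col_pi (isotope a b g L) (b c) = (g^-1 * col_pi L c * a)%g.
Proof.
rewrite /col_pi -[a in RHS]invgK -!invMg; congr (_^-1)%g.
by apply/permP => r; rewrite !permM !(permE (@lsq_col_inj _ _ _)) /= /iso_fun permK.
Qed.

Lemma par_isotope n (a b g : 'S_n) (L : latin n) : odd n ->
  par (isotope a b g L) = sgn a * sgn b * par L.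
Proof.
move=> odd_n; rewrite /par (reindex_inj (@perm_inj _ a)) /=.
rewrite [X in _ * X = _](reindex_inj (@perm_inj _ b)) /=.
under eq_bigr do rewrite row_sigma_isotope !sgnM sgnV.
under [X in _ * X = _]eq_bigr do rewrite col_pi_isotope !sgnM sgnV.
rewrite !big_split /= !prod_sgn_const_odd //.
by rewrite -[RHS]mulr1 -(sgn_sqr g); ring.
Qed.

Theorem lemma2p5 (n : nat) (L : latin n) (o : 'I_n) (alpha : 'S_n) (j : 'I_n) :
  odd n -> reduced L -> val o = 0%N ->
  par (isotope alpha
         (rcomp alpha (rcomp (col_pi L j) ((row_sigma L ((alpha^-1)%g o))^-1)%g))
         (rcomp alpha (col_pi L j)) L)
  = (sgn (row_sigma L ((alpha^-1)%g o)) * sgn (col_pi L j) * par L)%R.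
Proof.
move=> odd_n _ _; rewrite par_isotope // /rcomp !sgnM sgnV.
by rewrite -[RHS]mul1r -(sgn_sqr alpha); ring.
Qed.
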